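(* Let $G$ be a $k$-uniform $s$-cycle with $1\le s\le k-1$ and $k=q(k-s)\ge 3$ for a positive integer $q$. Then $G$ is regular and $\lambda(\mathcal{Q})=2q$. Assume further that $k$ is even. If either $q$ is odd, or $q=2^{t_0}(2l_0+1)$ for a positive integer $t_0$ and a nonnegative integer $l_0$ and the number $m$ of edges of $G$ is a multiple of $2^{t_0}$, then also $\lambda(\mathcal{L})=2q$.
   Context: A $k$-uniform $s$-cycle with $m$ edges has vertex set $\mathbb{Z}_n$, $n=m(k-s)$ (vertex $n+i$ identified with $i$), and edges $e_j=\{j(k-s)+1,\ldots,j(k-s)+k\}$, $j=0,\ldots,m-1$; it is assumed that $n\ge 2k-s$. A hypergraph is regular if all degrees $d_i$ (numbers of edges containing vertex $i$) are equal. For a real tensor $\mathcal{T}$ of order $k$ and dimension $n$, $\lambda\in\mathbb{R}$ is an H-eigenvalue if there is nonzero $\mathbf{x}\in\mathbb{R}^n$ with $(\mathcal{T}\mathbf{x}^{k-1})_i=\lambda x_i^{k-1}$ for all $i$, where $(\mathcal{T}\mathbf{x}^{k-1})_i=\sum_{i_2,\ldots,i_k}t_{ii_2\ldots i_k}x_{i_2}\cdots x_{i_k}$; $\lambda(\mathcal{T})$ is the largest H-eigenvalue. The adjacency tensor $\mathcal{A}$ has entries $1/(k-1)!$ at $(i_1,\ldots,i_k)$ with $\{i_1,\ldots,i_k\}$ an edge and $0$ otherwise; $\mathcal{D}$ is diagonal with entries $d_i$; $\mathcal{L}=\mathcal{D}-\mathcal{A}$, $\mathcal{Q}=\mathcal{D}+\mathcal{A}$.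 *)

From HB Require Import structures.
From mathcomp Require Import all_boot all_order all_algebra.
From mathcomp Require Import reals.
Unset Printing Implicit Defensive.
Import Order.TTheory GRing.Theory Num.Theory.
Local Open Scope ring_scope.

Definition nverts (k s m : nat) : nat := (m * (k - s))%N.

(* Vertex set Z_n is represented by 'I_n (vertex i stands for i mod n;
   vertex n is identified with 0).  Edge e_j = {j(k-s)+1, ..., j(k-s)+k} mod n. *)
Definition scycle_edge (k s m j : nat) : {set 'I_(nverts k s m)} :=
  [set v : 'I_(nverts k s m) |
     [exists t : 'I_k, (v : nat) == ((j * (k - s) + t.+1) %% nverts k s m)%N]].

Definition scycle_deg (k s m : nat) (i : 'I_(nverts k s m)) : nat :=
  #|[set j : 'I_m | i \in scycle_edge k s m j]|.

Definition is_regular (k s m : nat) : Prop :=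
  forall i j : 'I_(nverts k s m), scycle_deg k s m i = scycle_deg k s m j.

(* A real tensor of order k and dimension n: entry t_{i i_2 ... i_k} is
   T i f with f : 'I_(k-1) -> 'I_n listing (i_2,...,i_k). *)
Definition tensor (R : Type) (k n : nat) := 'I_n -> {ffun 'I_k.-1 -> 'I_n} -> R.

Definition tensor_apply (R : realType) (k n : nat) (T : tensor R k n)
  (x : 'I_n -> R) (i : 'I_n) : R :=
  \sum_(f : {ffun 'I_k.-1 -> 'I_n}) T i f * \prod_(j < k.-1) x (f j).

Definition is_H_eigenvalue (R : realType) (k n : nat) (T : tensor R k n)
  (lam : R) : Prop :=
  exists x : 'I_n -> R, (exists i, x i != 0) /\
    forall i, tensor_apply R k n T x i = lam * x i ^+ k.-1.

Definition is_largest_H_eigenvalue (R : realType) (k n : nat) (T : tensor R k n)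
  (lam : R) : Prop :=
  is_H_eigenvalue R k n T lam /\ forall mu, is_H_eigenvalue R k n T mu -> mu <= lam.

Definition adj_tensor (R : realType) (k s m : nat) : tensor R k (nverts k s m) :=
  fun i f =>
    if [exists j : 'I_m, i |: [set f t | t : 'I_k.-1] == scycle_edge k s m j]
    then ((k.-1)`!%:R)^-1 else 0.

Definition deg_tensor (R : realType) (k s m : nat) : tensor R k (nverts k s m) :=
  fun i f => if [forall t : 'I_k.-1, f t == i] then (scycle_deg k s m i)%:R else 0.

Definition lap_tensor (R : realType) (k s m : nat) : tensor R k (nverts k s m) :=
  fun i f => deg_tensor R k s m i f - adj_tensor R k s m i f.

Definition slap_tensor (R : realType) (k s m : nat) : tensor R k (nverts k s m) :=
  fun i f => deg_tensor R k s m i f + adj_tensor R k s m i f.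

From HB Require Import structures.
From mathcomp Require Import all_boot all_order all_algebra.
From mathcomp Require Import reals zify ring lra.
Import Order.TTheory GRing.Theory Num.Theory.
Set Implicit Arguments.
Unset Strict Implicit.
Unset Printing Implicit Defensive.

(* Put r = k - s, so k = q r and n = m r.  The cycle splits into m blocks of r consecutive
   vertices and each edge is the union of q cyclically consecutive blocks, so every vertex
   lies in exactly q edges, and (A x^{k-1})_i is the sum, over the q edges through i, of the
   product of the other k - 1 coordinates.  At a coordinate of maximal modulus this sum is at
   most q |x_i|^{k-1} in absolute value, so every H-eigenvalue of D + A or D - A is at most
   2q; for Q the all-ones vector attains 2q.
   For L take g dividing q and m with q / g odd (g = 1, resp. g = 2^t0), and put -1 on the
   first vertex of every block whose index is a multiple of g and 1 elsewhere.  Each edge then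
   contains exactly q / g entries -1, so the product over every edge is -1; as k - 1 is odd,
   this gives (L x^{k-1})_i = q x_i + q x_i = 2q x_i^{k-1}. *)

Lemma modn_double x d : x < 2 * d -> x %% d = if x < d then x else x - d.
Proof.
move=> lt_x_2d; case: ifP => lt_xd; first by rewrite modn_small.
by rewrite -[in LHS](@subnK d x) ?modnDr ?modn_small //; lia.
Qed.

Lemma card_ord_lt m q : q <= m -> #|[set u : 'I_m | u < q]| = q.
Proof.
move=> qm; rewrite -sum1_card (eq_bigl (fun u : 'I_m => u < q)) => [|u]; last by rewrite inE.
by rewrite (big_ord_narrow qm) sum1_card card_ord.
Qed.

Definition cdist (m j b : nat) : nat := (b + m - j) %% m.

Lemma cdist_addmod m j d : j < m -> d < m -> cdist m j ((j + d) %% m) = d.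
Proof.
move=> jm dm; rewrite /cdist (@modn_double (j + d)); last lia.
by case: ifP => ?; rewrite modn_double; [case: ifP|lia|case: ifP|lia]; lia.
Qed.

Lemma addn_cdist m j b : j < m -> b < m -> (j + cdist m j b) %% m = b.
Proof.
move=> jm bm; rewrite /cdist (@modn_double (b + m - j)); last lia.
by case: ifP => ?; rewrite modn_double; [case: ifP|lia|case: ifP|lia]; lia.
Qed.

Lemma card_cdist_lt m q b : q <= m -> b < m -> #|[set j : 'I_m | cdist m j b < q]| = q.
Proof.
move=> qm bm; have m_gt0 : 0 < m by lia.
pose dist (j : 'I_m) : 'I_m := Ordinal (ltn_pmod (b + m - j) m_gt0).
have dist_inj : injective dist.
  move=> j1 j2 /(congr1 val) /= eq_dist; apply: val_inj.
  have : (j1 + cdist m j1 b) %% m == (j2 + cdist m j2 b) %% m by rewrite !addn_cdist.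
  by rewrite {1}/cdist eq_dist eqn_modDr !modn_small // => /eqP.
rewrite -[RHS](card_ord_lt qm) -[RHS](card_preimset _ dist_inj).
by apply: eq_card => j; rewrite !inE.
Qed.

Lemma cdist_lt_inj m q j j' : 0 < q < m -> j < m -> j' < m ->
  (forall b, b < m -> (cdist m j b < q) = (cdist m j' b < q)) -> j = j'.
Proof.
move=> /andP [q_gt0 qm] jm jm' eq_win.
have near : cdist m j' j < q by rewrite -eq_win // /cdist addKn modnn.
have far : ~~ (cdist m j' ((j + m.-1) %% m) < q).
  by rewrite -eq_win ?cdist_addmod ?ltn_pmod; lia.
move: near far; rewrite /cdist (@modn_double (j + m.-1)); last lia.
case: ifP => ?; rewrite !modn_double; try lia; do 2 case: ifP; lia.
Qed.

Lemma sum_dvdn_consecutive g N : 0 < g -> \sum_(c < g) (g %| N + c) = 1.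
Proof.
move=> g_gt0; have ltNg := ltn_pmod N g_gt0.
pose c0 := Ordinal (ltn_pmod (g - N %% g) g_gt0).
have dvd_c0 : g %| N + c0.
  rewrite /dvdn /= modnDmr.
  have -> : N + (g - N %% g) = (N %/ g).+1 * g by rewrite {1}(divn_eq N g) mulSnr; lia.
  by rewrite modnMl.
rewrite (bigD1 c0) //= dvd_c0 big1 // => c ne_c0; apply/eqP; rewrite eqb0.
apply: contra ne_c0 => dvd_c; apply/eqP/val_inj.
have : (N + c) %% g == (N + c0) %% g by rewrite (eqP dvd_c) (eqP dvd_c0).
by rewrite eqn_modDl !modn_small // => /eqP.
Qed.

Lemma sum_dvdn_addn g N j : 0 < g -> g %| N -> \sum_(u < N) (g %| j + u) = N %/ g.
Proof.
move=> g_gt0 /dvdnP [p ->]; rewrite mulnK //.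
elim: p => [|p IH]; first by rewrite big_ord0.
rewrite mulSn big_split_ord /= sum_dvdn_consecutive // add1n -[in RHS]IH; congr _.+1.
by apply: eq_bigr => u _; rewrite addnCA dvdn_addr.
Qed.

Lemma sum_block_heads (P : pred nat) q r : 0 < r ->
  \sum_(t < q * r) ((t %% r == 0) && P (t %/ r)) = \sum_(u < q) P u.
Proof.
case: r => // r _; elim: q => [|q IH]; first by rewrite !big_ord0.
rewrite mulSnr big_split_ord [RHS]big_ord_recr /= IH; congr (_ + _).
rewrite big_ord_recl /= addn0 modnMl mulnK // eqxx big1 ?addn0 // => i _.
by rewrite /bump add1n modnMDl modn_small // ltnS.
Qed.

Lemma setU1_image_eq (T : finType) (K : nat) (E : {set T}) (i : T) (f : 'I_K -> T) :
  i \in E -> #|E| = K.+1 ->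
  (i |: [set f t | t : 'I_K] == E) = ([set f t | t : 'I_K] == E :\ i).
Proof.
move=> iE cardE; apply/eqP/eqP => [imf | ->]; last by rewrite setD1K.
have le_im : #|[set f t | t : 'I_K]| <= K.
  by rewrite -[K in _ <= K]card_ord leq_imset_card.
have := cardsU1 i [set f t | t : 'I_K]; rewrite imf cardE.
case: (boolP (i \notin _)) => [i_notin _ | _]; first by rewrite -imf setU1K.
by rewrite add0n => card_im; move: le_im; rewrite -card_im ltnn.
Qed.

Lemma image_eq_inj_ffun_on (T : finType) (K : nat) (A : {set T}) (f : {ffun 'I_K -> T}) :
  #|A| = K ->
  ([set f t | t : 'I_K] == A) = (f \in ffun_on [pred v in A]) && injectiveb f.
Proof.
move=> cardA; apply/eqP/andP => [imf | [/ffun_onP onA /injectiveP injf]].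
  split; first by apply/ffun_onP => t; rewrite inE -imf imset_f.
  have /imset_injP injf : #|[set f t | t : 'I_K]| == #|'I_K| by rewrite imf cardA card_ord.
  by apply/injectiveP => t1 t2; apply: injf.
apply/eqP; rewrite eqEcard card_imset // card_ord cardA leqnn andbT.
by apply/subsetP => _ /imsetP [t _ ->]; have := onA t.
Qed.

Lemma card_tuples_onto (T : finType) (K : nat) (A : {set T}) :
  #|A| = K -> #|[set f : {ffun 'I_K -> T} | [set f t | t : 'I_K] == A]| = K`!.
Proof.
move=> cardA; have -> : K`! = #|[pred v in A]| ^_ #|'I_K| by rewrite card_ord cardA ffactnn.
by rewrite -card_inj_ffuns_on; apply: eq_card => f; rewrite !inE image_eq_inj_ffun_on.
Qed.

Local Open Scope ring_scope.

Lemma sum_prod_tuples_onto (R : comPzSemiRingType) (T : finType) (K : nat)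
    (A : {set T}) (x : T -> R) :
  #|A| = K ->
  \sum_(f : {ffun 'I_K -> T} | [set f t | t : 'I_K] == A) \prod_(t < K) x (f t)
  = K`!%:R * \prod_(v in A) x v.
Proof.
move=> cardA; rewrite [LHS](eq_bigr (fun=> \prod_(v in A) x v)); last first.
  move=> f imf; have := imf; rewrite image_eq_inj_ffun_on // => /andP [_ /injectiveP injf].
  by rewrite -(eqP imf) big_imset //= => t1 t2 _ _ /injf.
rewrite sumr_const -[in LHS]mulr_natl -(card_tuples_onto cardA).
by congr (_%:R * _); apply: eq_card => f; rewrite inE.
Qed.

Lemma H_eigenvalue_le_twice (R : realType) (k n : nat) (T : tensor R k n) (d mu : R) :
  (forall x i, (forall j, `|x j| <= `|x i|) ->
     `|tensor_apply R k n T x i - d * x i ^+ k.-1| <= d * `|x i| ^+ k.-1) ->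
  is_H_eigenvalue R k n T mu -> mu <= 2 * d.
Proof.
move=> near_diag [x [[i0 x_i0] eig]].
have [i _ max_i] := @arg_maxP _ _ _ i0 xpredT (fun i => `|x i|) isT.
have x_i_gt0 : 0 < `|x i| by apply: lt_le_trans (max_i i0 isT); rewrite normr_gt0.
have := near_diag x i (fun j => max_i j isT).
rewrite eig -mulrBl normrM normrX ler_pM2r ?exprn_gt0 // => le_mu_d.
by have := ler_norm (mu - d); lra.
Qed.

Lemma tensor_applyD (R : realType) (k n : nat) (T1 T2 : tensor R k n) x i :
  tensor_apply R k n (fun i f => T1 i f + T2 i f) x i =
  tensor_apply R k n T1 x i + tensor_apply R k n T2 x i.
Proof. by rewrite /tensor_apply -big_split; apply: eq_bigr => f _; rewrite mulrDl. Qed.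

Lemma tensor_applyB (R : realType) (k n : nat) (T1 T2 : tensor R k n) x i :
  tensor_apply R k n (fun i f => T1 i f - T2 i f) x i =
  tensor_apply R k n T1 x i - tensor_apply R k n T2 x i.
Proof. by rewrite /tensor_apply -sumrB; apply: eq_bigr => f _; rewrite mulrBl. Qed.

Section SCycle.
Local Open Scope nat_scope.

Variables k s m q : nat.
Local Notation r := (k - s).
Local Notation n := (nverts k s m).
Hypotheses (r_gt0 : 0 < r) (q_gt0 : 0 < q) (k_eq : k = q * r) (q_lt_m : q < m).

(* Vertex [v] sits at position [offset v = v - 1 (mod n)] of the cycle, at place [cell v] of
   the [block v]-th run of [r] consecutive positions; edge [e_j] covers the positions
   [j r, ..., j r + k - 1], i.e. the blocks [j, ..., j + q - 1 (mod m)]. *)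
Definition offset (v : nat) : nat := (v + n - 1) %% n.
Definition block (v : nat) : nat := offset v %/ r.
Definition cell (v : nat) : nat := offset v %% r.

Lemma k_lt_n : k < n.
Proof. by rewrite {1}k_eq /nverts ltn_mul2r r_gt0. Qed.

Lemma k_gt0 : 0 < k.
Proof. by rewrite k_eq muln_gt0 q_gt0. Qed.

Lemma n_gt0 : 0 < n.
Proof. by apply: leq_ltn_trans k_lt_n. Qed.

Lemma offset_succ a : offset (a.+1 %% n) = a %% n.
Proof.
rewrite /offset -addnBA ?n_gt0 // modnDml addSnnS subn1 prednK ?n_gt0 //.
by rewrite modnDr.
Qed.

Lemma offsetK v : v < n -> (offset v).+1 %% n = v.
Proof.
move=> lt_vn; rewrite /offset -addn1 modnDml addn1 subn1 prednK ?addn_gt0 ?n_gt0 ?orbT //.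
by rewrite modnDr modn_small.
Qed.

Lemma block_lt v : block v < m.
Proof. by rewrite /block ltn_divLR // ltn_pmod ?n_gt0. Qed.

Lemma block_edge_vertex j t : j < m -> block ((j * r + t.+1) %% n) = (j + t %/ r) %% m.
Proof.
move=> lt_jm; rewrite /block addnS offset_succ divn_modl ?dvdn_mull //.
by rewrite mulnK // divnMDl.
Qed.

Lemma cell_edge_vertex j t : cell ((j * r + t.+1) %% n) = t %% r.
Proof. by rewrite /cell addnS offset_succ (modn_dvdm _ (dvdn_mull m (dvdnn r))) modnMDl. Qed.

Definition edge_vertex j (t : 'I_k) : 'I_n := Ordinal (ltn_pmod (j * r + t.+1) n_gt0).

Lemma edge_vertex_inj j : injective (edge_vertex j).
Proof.
have lt_tn (t : 'I_k) : t.+1 < n by apply: leq_ltn_trans k_lt_n.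
move=> t1 t2 /(congr1 val) /= /eqP; rewrite eqn_modDl !modn_small //.
by move=> /eqP [] /val_inj.
Qed.

Lemma scycle_edgeE j : scycle_edge k s m j = [set edge_vertex j t | t : 'I_k].
Proof.
apply/setP => v; rewrite inE; apply/existsP/imsetP => [[t /eqP v_eq] | [t _ ->]].
  by exists t => //; apply: val_inj.
by exists t.
Qed.

Lemma card_scycle_edge j : #|scycle_edge k s m j| = k.
Proof. by rewrite scycle_edgeE card_imset ?card_ord //; apply: edge_vertex_inj. Qed.

Lemma card_scycle_edgeD1 j i : i \in scycle_edge k s m j -> #|scycle_edge k s m j :\ i| = k.-1.
Proof.
move=> i_in; have := cardsD1 i (scycle_edge k s m j).
by rewrite i_in card_scycle_edge add1n => /(congr1 predn) /= <-.
Qed.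

Lemma mem_scycle_edge (v : 'I_n) (j : 'I_m) :
  (v \in scycle_edge k s m j) = (cdist m j (block v) < q).
Proof.
have lt_jm := ltn_ord j; rewrite scycle_edgeE.
apply/imsetP/idP => [[t _ ->] | lt_dist].
  have lt_tq : t %/ r < q by rewrite ltn_divLR // -k_eq.
  by rewrite /= block_edge_vertex // cdist_addmod //; apply: ltn_trans q_lt_m.
have lt_tk : cdist m j (block v) * r + cell v < k.
  rewrite [X in _ < X]k_eq; apply: (@leq_trans (cdist m j (block v) * r + r)).
    by rewrite ltn_add2l ltn_pmod.
  by rewrite -mulSnr leq_mul2r lt_dist orbT.
exists (Ordinal lt_tk) => //; apply: val_inj => /=.
have := addn_cdist lt_jm (block_lt v); set d := cdist _ _ _ => block_eq.
rewrite -{1}(offsetK (ltn_ord v)) {1}(divn_eq (offset v) r) -/(block v) -/(cell v).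
by rewrite -block_eq muln_modl -/(nverts k s m) -addnS modnDml mulnDl -addnA addnS.
Qed.

Lemma scycle_degE i : scycle_deg k s m i = q.
Proof.
rewrite /scycle_deg -(card_cdist_lt (ltnW q_lt_m) (block_lt i)).
by apply: eq_card => j; rewrite [LHS]in_set [RHS]in_set mem_scycle_edge.
Qed.

Lemma scycle_edge_inj (j j' : 'I_m) : scycle_edge k s m j = scycle_edge k s m j' -> j = j'.
Proof.
move=> eq_e; apply/val_inj/(@cdist_lt_inj m q); rewrite ?q_gt0 ?ltn_ord // => b lt_bm.
pose v : 'I_n := Ordinal (ltn_pmod (b * r + 1) n_gt0).
have := congr1 (fun E : {set 'I_n} => v \in E) eq_e.
by rewrite /= !mem_scycle_edge block_edge_vertex // div0n addn0 modn_small.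
Qed.

Local Open Scope ring_scope.
Variable R : realType.

Definition adj_sum (x : 'I_n -> R) (i : 'I_n) : R :=
  \sum_(j : 'I_m | i \in scycle_edge k s m j) \prod_(v in scycle_edge k s m j :\ i) x v.

Lemma tensor_apply_deg x i :
  tensor_apply R k n (deg_tensor R k s m) x i = q%:R * x i ^+ k.-1.
Proof.
rewrite /tensor_apply (bigD1 [ffun=> i]) //= [X in _ + X]big1 => [|f ne_f]; last first.
  rewrite /deg_tensor; case: ifP => [/forallP f_const | _]; last by rewrite mul0r.
  by case/negP: ne_f; apply/eqP/ffunP => t; rewrite ffunE; apply/eqP.
rewrite /deg_tensor ifT; last by apply/forallP => t; rewrite ffunE.
rewrite scycle_degE addr0 (eq_bigr (fun=> x i)) => [|t _]; last by rewrite ffunE.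
by rewrite prodr_const card_ord.
Qed.

Lemma adj_tensorE i (f : {ffun 'I_k.-1 -> 'I_n}) :
  adj_tensor R k s m i f =
  (k.-1)`!%:R^-1 * \sum_(j : 'I_m) (i |: [set f t | t : 'I_k.-1] == scycle_edge k s m j)%:R.
Proof.
rewrite /adj_tensor; case: existsP => [[j0 cov_j0] | no_cov]; last first.
  rewrite big1 ?mulr0 // => j _.
  by case: (boolP (_ == _)) => // cov_j; case: no_cov; exists j.
rewrite (bigD1 j0) //= cov_j0 big1 ?addr0 ?mulr1 // => j ne_j.
case: (boolP (_ == _)) => // /eqP cov_j; case/negP: ne_j; apply/eqP/scycle_edge_inj.
by rewrite -cov_j (eqP cov_j0).
Qed.

Lemma tensor_apply_adj x i :
  tensor_apply R k n (adj_tensor R k s m) x i = adj_sum x i.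
Proof.
rewrite /tensor_apply; under eq_bigr do rewrite adj_tensorE -mulrA mulr_suml.
rewrite -mulr_sumr exchange_big mulr_sumr /adj_sum [RHS]big_mkcond; apply: eq_bigr => j _.
rewrite (eq_bigr (fun f : {ffun _ -> _} =>
    if i |: [set f t | t : 'I_k.-1] == scycle_edge k s m j then \prod_(t < k.-1) x (f t) else 0))
  => [|f _]; last by case: (_ == _); rewrite ?mul1r ?mul0r.
rewrite -big_mkcond /=; case: ifP => [i_in | i_notin]; last first.
  rewrite big_pred0 ?mulr0 // => f; apply: contraFF i_notin => /eqP <-.
  by rewrite setU11.
have card_edge : #|scycle_edge k s m j| = (k.-1).+1 by rewrite card_scycle_edge prednK ?k_gt0.
rewrite (eq_bigl _ _ (fun f : {ffun _ -> _} => setU1_image_eq f i_in card_edge)).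
by rewrite sum_prod_tuples_onto ?card_scycle_edgeD1 ?mulKf ?pnatr_eq0 -?lt0n ?fact_gt0.
Qed.

Lemma sum_edges_at_const (c : R) i :
  \sum_(j : 'I_m | i \in scycle_edge k s m j) c = q%:R * c.
Proof.
rewrite sumr_const -(scycle_degE i) mulr_natl; congr (_ *+ _).
by apply: eq_card => j; rewrite inE.
Qed.

Lemma norm_adj_sum_le x i :
  (forall j, `|x j| <= `|x i|) -> `|adj_sum x i| <= q%:R * `|x i| ^+ k.-1.
Proof.
move=> max_i; apply: le_trans (ler_norm_sum _ _ _) _; rewrite -(sum_edges_at_const _ i).
apply: ler_sum => j i_in; rewrite normr_prod -(card_scycle_edgeD1 i_in) -prodr_const.
by apply: ler_prod => v _; rewrite normr_ge0 max_i.
Qed.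

Lemma tensor_apply_slap x i :
  tensor_apply R k n (slap_tensor R k s m) x i = q%:R * x i ^+ k.-1 + adj_sum x i.
Proof. by rewrite tensor_applyD tensor_apply_deg tensor_apply_adj. Qed.

Lemma tensor_apply_lap x i :
  tensor_apply R k n (lap_tensor R k s m) x i = q%:R * x i ^+ k.-1 - adj_sum x i.
Proof. by rewrite tensor_applyB tensor_apply_deg tensor_apply_adj. Qed.

Lemma H_eigenvalue_le_2q (T : tensor R k n) (sg : R) mu :
  `|sg| = 1 ->
  (forall x i, tensor_apply R k n T x i = q%:R * x i ^+ k.-1 + sg * adj_sum x i) ->
  is_H_eigenvalue R k n T mu -> mu <= (2 * q)%:R.
Proof.
move=> sg_unit T_eq; rewrite natrM; apply: H_eigenvalue_le_twice => x i max_i.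
by rewrite T_eq addrC addKr normrM sg_unit mul1r norm_adj_sum_le.
Qed.

Lemma slap_largest_H_eigenvalue :
  is_largest_H_eigenvalue R k n (slap_tensor R k s m) (2 * q)%:R.
Proof.
split; last first.
  move=> mu; apply: (@H_eigenvalue_le_2q _ 1) => [|x i].
    by rewrite normr1.
  by rewrite mul1r tensor_apply_slap.
exists (fun=> 1); split; first by exists (Ordinal n_gt0); rewrite oner_neq0.
move=> i; rewrite tensor_apply_slap /adj_sum (eq_bigr (fun=> 1)) => [|j _]; last first.
  by rewrite big1.
by rewrite sum_edges_at_const expr1n natrM; lra.
Qed.

Variable g : nat.
Hypotheses (g_gt0 : (0 < g)%N) (g_dvd_q : (g %| q)%N) (g_dvd_m : (g %| m)%N)
  (odd_q_div_g : odd (q %/ g)).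

Definition sign_label (v : 'I_n) : R := (-1) ^+ ((cell v == 0) && (g %| block v))%N.

Lemma prod_sign_label_edge (j : 'I_m) :
  \prod_(v in scycle_edge k s m j) sign_label v = -1.
Proof.
rewrite scycle_edgeE big_imset /=; last by move=> t1 t2 _ _; apply: edge_vertex_inj.
rewrite (eq_bigl (fun=> true)) // /sign_label prodrXr.
rewrite (eq_bigr (fun t : 'I_k => ((t %% r == 0) && (g %| j + t %/ r))%N : nat))
  => [|t _]; last first.
  rewrite /= cell_edge_vertex block_edge_vertex ?ltn_ord //.
  by rewrite /dvdn (modn_dvdm _ g_dvd_m).
(* [k] occurs in the type of the summation index, so it cannot be rewritten to [q * r] in place. *)
have count_heads K : K = (q * r)%N ->
    (\sum_(t < K) (t %% r == 0) && (g %| j + t %/ r) = q %/ g)%N.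
  by move=> ->; rewrite (sum_block_heads (fun u => g %| j + u)%N) // sum_dvdn_addn.
by rewrite count_heads // -signr_odd odd_q_div_g expr1.
Qed.

Lemma lap_largest_H_eigenvalue :
  ~~ odd k -> is_largest_H_eigenvalue R k n (lap_tensor R k s m) (2 * q)%:R.
Proof.
move=> even_k; split; last first.
  move=> mu; apply: (@H_eigenvalue_le_2q _ (-1)) => [|x i].
    by rewrite normrN1.
  by rewrite mulN1r tensor_apply_lap.
exists sign_label; split; first by exists (Ordinal n_gt0); rewrite signr_eq0.
move=> i; rewrite tensor_apply_lap /adj_sum.
have label_sqr : sign_label i * sign_label i = 1 by rewrite -expr2 sqrr_sign.
rewrite (eq_bigr (fun=> - sign_label i)) => [|j i_in]; last first.
  have := prod_sign_label_edge j; rewrite (big_setD1 i i_in) /= => prod_eq.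
  by rewrite -[LHS]mul1r -{1}label_sqr -mulrA prod_eq mulrN1.
have odd_pred_k : odd k.-1 by move: even_k; rewrite -{1}(prednK k_gt0) /= negbK.
have -> : sign_label i ^+ k.-1 = sign_label i.
  by rewrite /sign_label; case: (_ && _); rewrite ?expr1n // expr1 -signr_odd odd_pred_k.
by rewrite sum_edges_at_const natrM; ring.
Qed.

End SCycle.

Theorem proposition5p1 (R : realType) (k s m q : nat) :
  (1 <= s)%N -> (s <= k - 1)%N -> (0 < q)%N -> k = (q * (k - s))%N -> (3 <= k)%N ->
  (2 * k - s <= nverts k s m)%N ->
  is_regular k s m /\
  is_largest_H_eigenvalue R k (nverts k s m) (slap_tensor R k s m) (2 * q)%:R /\
  (~~ odd k ->
   (odd q \/ exists t0 l0 : nat,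
       (0 < t0)%N /\ q = (2 ^ t0 * (2 * l0 + 1))%N /\ (2 ^ t0 %| m)%N) ->
   is_largest_H_eigenvalue R k (nverts k s m) (lap_tensor R k s m) (2 * q)%:R).
Proof.
move=> s_gt0 s_lt_k q_gt0 k_eq _ n_ge.
have r_gt0 : (0 < k - s)%N by lia.
have q_lt_m : (q < m)%N.
  have n_ge_eq : (2 * k - s = q.+1 * (k - s))%N by rewrite [(q.+1 * _)%N]mulSn -k_eq; lia.
  by move: n_ge; rewrite n_ge_eq /nverts leq_pmul2r.
split; first by move=> i j; rewrite !(scycle_degE r_gt0 k_eq q_lt_m).
split; first exact: slap_largest_H_eigenvalue.
move=> even_k odd_cofactor.
have [g /and3P [g_gt0 g_dvd_q g_dvd_m] odd_q_div_g] :
    exists2 g, [&& 0 < g, g %| q & g %| m]%N & odd (q %/ g).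
  case: odd_cofactor => [odd_q | [t0 [l0 [_ [q_eq t0_dvd_m]]]]].
    by exists 1%N; rewrite ?dvd1n ?divn1.
  exists (2 ^ t0)%N; first by rewrite expn_gt0 q_eq dvdn_mulr.
  by rewrite q_eq mulKn ?expn_gt0 // addn1 /= mul2n odd_double.
exact: (lap_largest_H_eigenvalue _ _ _ _ _ g_gt0 g_dvd_q g_dvd_m).
Qed.
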